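(* Let $G$ be an ordered abelian group, $\beta_0,\beta_1,c\in G$, $\lambda$ a limit ordinal, and $(\gamma_{0,j})_{j<\lambda}$ a well-ordered, monotone increasing family of elements $\ge0$ of $G$ without last element; set $\gamma_{1,j}=\gamma_{0,j}+c$ for $j<\lambda$. Then there exist a subset $A\subset[1,\lambda)$ and a map $\sigma:A\to[1,\lambda)$ such that $\beta_0+\gamma_{0,j_0}\neq\beta_1+\gamma_{1,j_1}$ for all $j_0,j_1<\lambda$ satisfying $j_1\neq\sigma(j_0)$ whenever $j_0\in A$. *)

From mathcomp Require Import all_boot all_algebra.
Set Implicit Arguments. Unset Strict Implicit. Unset Printing Implicit Defensive.
Import GRing.Theory.
Local Open Scope ring_scope.

Definition ordered_abelian_group (G : zmodType) (le : G -> G -> Prop) : Prop :=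
  [/\ (forall x, le x x),
      (forall x y, le x y -> le y x -> x = y),
      (forall x y z, le x y -> le y z -> le x z),
      (forall x y, le x y \/ le y x)
    & (forall x y z, le x y -> le (x + z) (y + z))].

Definition strict_of (T : Type) (le : T -> T -> Prop) (x y : T) : Prop :=
  le x y /\ x <> y.

(* A limit ordinal lambda, presented as the well-ordered set [0, lambda) of
   its elements: a strict total order that is well-founded, nonempty and has
   no last element. *)
Definition limit_ordinal_type (J : Type) (ltJ : J -> J -> Prop) : Prop :=
  (forall i, ~ ltJ i i) /\
  (forall i j k, ltJ i j -> ltJ j k -> ltJ i k) /\
  (forall i j, [\/ ltJ i j, i = j | ltJ j i]) /\
  well_founded ltJ /\
  (exists j : J, True) /\
  (forall i, exists j, ltJ i j).

(* j lies in [1, lambda), i.e. j is not the least ordinal 0. *)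
Definition nonzero_ord (J : Type) (ltJ : J -> J -> Prop) (j : J) : Prop :=
  exists i, ltJ i j.

From Stdlib Require Import ClassicalEpsilon.
From mathcomp Require Import all_boot all_algebra.
Import GRing.Theory.
Local Open Scope ring_scope.

(* A strictly increasing family on a totally ordered index set is injective,
   so the equation [beta0 + gamma0 j0 = beta1 + gamma0 j1 + c] has at most one
   solution j1 for each j0.  Let A be the set of j0 >= 1 having a solution
   j1 >= 1 and sigma j0 that solution. *)

Lemma strict_mono_inj {J T : Type} {ltJ : J -> J -> Prop}
    {le : T -> T -> Prop} {f : J -> T} :
  (forall i j, [\/ ltJ i j, i = j | ltJ j i]) ->
  (forall i j, ltJ i j -> strict_of le (f i) (f j)) ->
  injective f.
Proof.
move=> trich mono i j fij.
case: (trich i j) => // [/mono [_ /(_ fij)] | /mono [_ /(_ (esym fij))]] [].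
Qed.

Lemma functional_rel_choice {J K : Type} (k0 : K) {R : J -> K -> Prop} :
  (forall j k k', R j k -> R j k' -> k = k') ->
  exists sigma : J -> K, forall j k, R j k -> k = sigma j.
Proof.
move=> Runiq; exists (fun j => epsilon (inhabits k0) (R j)) => j k Rjk.
exact: Runiq Rjk (epsilon_spec _ _ (ex_intro _ k Rjk)).
Qed.

Lemma shifted_eq_inj {G : zmodType} {J : Type} {g : J -> G} {b0 b1 c : G}
    {j0 j1 j1' : J} :
  injective g ->
  b0 + g j0 = b1 + (g j1 + c) -> b0 + g j0 = b1 + (g j1' + c) -> j1 = j1'.
Proof. by move=> g_inj -> /addrI/addIr/g_inj. Qed.

Theorem lemma1p2
  (G : zmodType) (le : G -> G -> Prop) (HG : ordered_abelian_group le)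
  (beta0 beta1 c : G)
  (J : Type) (ltJ : J -> J -> Prop) (Hlam : limit_ordinal_type ltJ)
  (gamma0 gamma1 : J -> G)
  (Hpos : forall j, le 0 (gamma0 j))
  (Hincr : forall i j, ltJ i j -> strict_of le (gamma0 i) (gamma0 j))
  (Hgamma1 : forall j, gamma1 j = gamma0 j + c) :
  exists (A : J -> Prop) (sigma : J -> J),
    (forall j, A j -> nonzero_ord ltJ j /\ nonzero_ord ltJ (sigma j)) /\
    (forall j0 j1, nonzero_ord ltJ j0 -> nonzero_ord ltJ j1 ->
       (A j0 -> j1 <> sigma j0) ->
       beta0 + gamma0 j0 <> beta1 + gamma1 j1).
Proof.
have [_ [_ [trich [_ [[j00 _] _]]]]] := Hlam.
have gamma0_inj := strict_mono_inj trich Hincr.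
pose partner j0 j1 :=
  nonzero_ord ltJ j1 /\ beta0 + gamma0 j0 = beta1 + gamma1 j1.
have [sigma sigmaP] : exists sigma : J -> J,
    forall j0 j1, partner j0 j1 -> j1 = sigma j0.
  apply: (functional_rel_choice j00 (R := partner)) => j0 j1 j1' [_ E] [_ E'].
  by rewrite !Hgamma1 in E E'; apply: shifted_eq_inj gamma0_inj E E'.
exists (fun j0 => nonzero_ord ltJ j0 /\ exists j1, partner j0 j1), sigma.
split=> [j [nz0 [j1 Pj1]] | j0 j1 nz0 nz1 notsigma E].
- by split=> //; rewrite -(sigmaP _ _ Pj1); case: Pj1.
- by apply: notsigma; [split=> //; exists j1 | apply: sigmaP].
Qed.
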